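(* For any small cartesian closed category $\mathbf{C}$, there exist a set $S$ and an $S$-sorted CCC $\mathbf{CFam}_S\to\tilde{\mathbf{C}}$ such that $\mathbf{C}$ is equivalent to $\tilde{\mathbf{C}}$.
   Context: $\mathsf{BiMag}_S$ is the set of formal expressions generated inductively by: each $X\in S$, the symbol $1$, and $X\times Y$, $Y^X$ for $X,Y\in\mathsf{BiMag}_S$. $\mathbf{CFam}_S$ is the free cartesian closed category with object set $\mathsf{BiMag}_S$ and no generating morphisms. An $S$-sorted CCC is a CCC $\tilde{\mathbf{C}}$ with $\mathrm{Ob}(\tilde{\mathbf{C}})=\mathsf{BiMag}_S$ together with a cartesian closed functor $\iota:\mathbf{CFam}_S\to\tilde{\mathbf{C}}$ that is the identity on objects. *)

Set Implicit Arguments.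

Record CatOn (O : Type) := {
  Hom : O -> O -> Type;
  idm : forall A, Hom A A;
  cmp : forall A B D, Hom B D -> Hom A B -> Hom A D;
  cmp_id_l : forall A B (f : Hom A B), cmp (idm B) f = f;
  cmp_id_r : forall A B (f : Hom A B), cmp f (idm A) = f;
  cmp_assoc : forall A B D E (h : Hom D E) (g : Hom B D) (f : Hom A B),
      cmp h (cmp g f) = cmp (cmp h g) f }.
Arguments Hom {O} c _ _.
Arguments idm {O} c A.
Arguments cmp {O} c {A B D} _ _.

(* A small category: objects and hom-sets live in a fixed universe Type. *)
Record Category := mkCategory { Ob : Type; cat :> CatOn Ob }.

Definition is_iso {O} (C : CatOn O) (A B : O) (f : Hom C A B) : Prop :=
  exists g : Hom C B A, cmp C g f = idm C A /\ cmp C f g = idm C B.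
Arguments is_iso {O} C {A B} f.

(* exp A B denotes the exponential B^A, with evaluation ev : B^A x A -> B. *)
Record CCCOn {O} (C : CatOn O) := {
  one : O;
  bang : forall X, Hom C X one;
  bang_uniq : forall X (f : Hom C X one), f = bang X;
  prod : O -> O -> O;
  pi1 : forall A B, Hom C (prod A B) A;
  pi2 : forall A B, Hom C (prod A B) B;
  pair : forall X A B, Hom C X A -> Hom C X B -> Hom C X (prod A B);
  pair_pi1 : forall X A B (f : Hom C X A) (g : Hom C X B),
      cmp C (pi1 A B) (pair X A B f g) = f;
  pair_pi2 : forall X A B (f : Hom C X A) (g : Hom C X B),
      cmp C (pi2 A B) (pair X A B f g) = g;
  pair_uniq : forall X A B (h : Hom C X (prod A B)),
      h = pair X A B (cmp C (pi1 A B) h) (cmp C (pi2 A B) h);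
  exp : O -> O -> O;
  ev : forall A B, Hom C (prod (exp A B) A) B;
  cur : forall X A B, Hom C (prod X A) B -> Hom C X (exp A B);
  cur_ev : forall X A B (f : Hom C (prod X A) B),
      cmp C (ev A B) (pair _ _ _ (cmp C (cur X A B f) (pi1 X A)) (pi2 X A)) = f;
  cur_uniq : forall X A B (h : Hom C X (exp A B)),
      h = cur X A B (cmp C (ev A B) (pair _ _ _ (cmp C h (pi1 X A)) (pi2 X A))) }.
Arguments one {O C} c.
Arguments bang {O C} c X.
Arguments prod {O C} c _ _.
Arguments pi1 {O C} c A B.
Arguments pi2 {O C} c A B.
Arguments pair {O C} c {X A B} _ _.
Arguments exp {O C} c _ _.
Arguments ev {O C} c A B.
Arguments cur {O C} c {X A B} _.

(* bexp X Y is the formal exponential Y^X. *)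
Inductive BiMag (S : Type) : Type :=
| bvar : S -> BiMag S
| bone : BiMag S
| bprod : BiMag S -> BiMag S -> BiMag S
| bexp : BiMag S -> BiMag S -> BiMag S.
Arguments bone {S}.

(* ---------- The free CCC CFam_S (no generating morphisms) ----------
   Morphisms A -> B of CFam_S are the terms Tm A B modulo the congruence
   TmEq generated by the CCC equations. *)
Inductive Tm (S : Type) : BiMag S -> BiMag S -> Type :=
| t_id : forall A, Tm A A
| t_comp : forall A B D, Tm B D -> Tm A B -> Tm A D
| t_bang : forall A, Tm A bone
| t_pi1 : forall A B, Tm (bprod A B) A
| t_pi2 : forall A B, Tm (bprod A B) B
| t_pair : forall X A B, Tm X A -> Tm X B -> Tm X (bprod A B)
| t_ev : forall A B, Tm (bprod (bexp A B) A) B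
| t_cur : forall X A B, Tm (bprod X A) B -> Tm X (bexp A B).
Arguments t_id {S} A.
Arguments t_comp {S A B D} _ _.
Arguments t_bang {S} A.
Arguments t_pi1 {S} A B.
Arguments t_pi2 {S} A B.
Arguments t_pair {S X A B} _ _.
Arguments t_ev {S} A B.
Arguments t_cur {S X A B} _.

Inductive TmEq (S : Type) : forall A B : BiMag S, Tm A B -> Tm A B -> Prop :=
| te_refl : forall A B (f : Tm A B), TmEq f f
| te_sym : forall A B (f g : Tm A B), TmEq f g -> TmEq g f
| te_trans : forall A B (f g h : Tm A B), TmEq f g -> TmEq g h -> TmEq f h
| te_comp : forall A B D (g g' : Tm B D) (f f' : Tm A B),
    TmEq g g' -> TmEq f f' -> TmEq (t_comp g f) (t_comp g' f')
| te_pair : forall X A B (f f' : Tm X A) (g g' : Tm X B),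
    TmEq f f' -> TmEq g g' -> TmEq (t_pair f g) (t_pair f' g')
| te_cur : forall X A B (f f' : Tm (bprod X A) B),
    TmEq f f' -> TmEq (t_cur f) (t_cur f')
| te_id_l : forall A B (f : Tm A B), TmEq (t_comp (t_id B) f) f
| te_id_r : forall A B (f : Tm A B), TmEq (t_comp f (t_id A)) f
| te_assoc : forall A B D E (h : Tm D E) (g : Tm B D) (f : Tm A B),
    TmEq (t_comp h (t_comp g f)) (t_comp (t_comp h g) f)
| te_bang : forall A (f : Tm A bone), TmEq f (t_bang A)
| te_pair_pi1 : forall X A B (f : Tm X A) (g : Tm X B),
    TmEq (t_comp (t_pi1 A B) (t_pair f g)) f
| te_pair_pi2 : forall X A B (f : Tm X A) (g : Tm X B),
    TmEq (t_comp (t_pi2 A B) (t_pair f g)) g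
| te_pair_eta : forall X A B (h : Tm X (bprod A B)),
    TmEq h (t_pair (t_comp (t_pi1 A B) h) (t_comp (t_pi2 A B) h))
| te_cur_ev : forall X A B (f : Tm (bprod X A) B),
    TmEq (t_comp (t_ev A B) (t_pair (t_comp (t_cur f) (t_pi1 X A)) (t_pi2 X A))) f
| te_cur_eta : forall X A B (h : Tm X (bexp A B)),
    TmEq h (t_cur (t_comp (t_ev A B) (t_pair (t_comp h (t_pi1 X A)) (t_pi2 X A)))).

(* ---------- S-sorted CCCs ----------
   A CCC Ct with object set BiMag S, together with a cartesian closed functor
   iota : CFam_S -> Ct that is the identity on objects.  A functor out of the
   quotient Tm/TmEq is given by a map on terms that respects TmEq and is
   functorial; it is cartesian closed when the canonical comparison maps
   iota(1) -> 1, iota(A x B) -> iota A x iota B and iota(B^A) -> (iota B)^(iota A)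
   are isomorphisms. *)
Record SSortedCCC (S : Type) := {
  sc_cat : CatOn (BiMag S);
  sc_ccc : CCCOn sc_cat;
  iota : forall A B : BiMag S, Tm A B -> Hom sc_cat A B;
  iota_resp : forall A B (f g : Tm A B), TmEq f g -> iota f = iota g;
  iota_id : forall A, iota (t_id A) = idm sc_cat A;
  iota_comp : forall A B D (g : Tm B D) (f : Tm A B),
      iota (t_comp g f) = cmp sc_cat (iota g) (iota f);
  iota_one : is_iso sc_cat (bang sc_ccc bone);
  iota_prod : forall A B : BiMag S,
      is_iso sc_cat (pair sc_ccc (iota (t_pi1 A B)) (iota (t_pi2 A B)));
  iota_exp : forall (A B : BiMag S)
      (psi : Hom sc_cat (prod sc_ccc (bexp A B) A) (bprod (bexp A B) A)),
      cmp sc_cat psi (pair sc_ccc (iota (t_pi1 (bexp A B) A)) (iota (t_pi2 (bexp A B) A)))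
        = idm sc_cat _ ->
      cmp sc_cat (pair sc_ccc (iota (t_pi1 (bexp A B) A)) (iota (t_pi2 (bexp A B) A))) psi
        = idm sc_cat _ ->
      is_iso sc_cat (cur sc_ccc (cmp sc_cat (iota (t_ev A B)) psi)) }.
Arguments sc_cat {S} s.
Arguments sc_ccc {S} s.
Arguments iota {S} s {A B} _.

Record Functor {O1} (C1 : CatOn O1) {O2} (C2 : CatOn O2) := {
  fobj : O1 -> O2;
  fmap : forall A B, Hom C1 A B -> Hom C2 (fobj A) (fobj B);
  fmap_id : forall A, fmap A A (idm C1 A) = idm C2 (fobj A);
  fmap_comp : forall A B D (g : Hom C1 B D) (f : Hom C1 A B),
      fmap A D (cmp C1 g f) = cmp C2 (fmap B D g) (fmap A B f) }.
Arguments fobj {O1 C1 O2 C2} _ _.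
Arguments fmap {O1 C1 O2 C2} _ {A B} _.

Definition Fid {O} (C : CatOn O) : Functor C C.
Proof.
  refine {| fobj := fun A => A; fmap := fun A B f => f |}; reflexivity.
Defined.

Definition Fcomp {O1 O2 O3} {C1 : CatOn O1} {C2 : CatOn O2} {C3 : CatOn O3}
  (G : Functor C2 C3) (F : Functor C1 C2) : Functor C1 C3.
Proof.
  refine {| fobj := fun A => fobj G (fobj F A);
            fmap := fun A B f => fmap G (fmap F f) |}.
  - intros A. rewrite !fmap_id. reflexivity.
  - intros A B D g f. rewrite !fmap_comp. reflexivity.
Defined.

Definition NatIso {O1} {C1 : CatOn O1} {O2} {C2 : CatOn O2}
  (F G : Functor C1 C2) : Prop :=
  exists eta : forall A, Hom C2 (fobj F A) (fobj G A),
    (forall A, is_iso C2 (eta A)) /\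
    (forall A B (f : Hom C1 A B),
        cmp C2 (eta B) (fmap F f) = cmp C2 (fmap G f) (eta A)).

Definition Equivalent {O1} (C1 : CatOn O1) {O2} (C2 : CatOn O2) : Prop :=
  exists (F : Functor C1 C2) (G : Functor C2 C1),
    NatIso (Fcomp G F) (Fid C1) /\ NatIso (Fcomp F G) (Fid C2).

(** Take S to be the set of objects of C and read every formal expression of
    BiMag_S as an object of C, by interpreting the formal 1, x and ^ with the
    chosen terminal object, products and exponentials of C.  Let C~ have the
    hom-sets of C between the interpretations.  Its cartesian closed structure
    is that of C, so the comparison maps of the interpretation functor
    CFam_S -> C~ are identities; and since every object X of C is the
    interpretation of the sort X, C~ is equivalent to C. *)
Set Implicit Arguments.

Lemma is_iso_idm {O} (C : CatOn O) (A : O) : is_iso C (idm C A).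
Proof. exists (idm C A); split; apply cmp_id_l. Qed.

Section InducedCategory.

Variables (O O' : Type) (C : CatOn O) (F : O' -> O).

Definition induced_cat : CatOn O' :=
  {| Hom := fun A B => Hom C (F A) (F B);
     idm := fun A => idm C (F A);
     cmp := fun A B D g f => cmp C g f;
     cmp_id_l := fun A B => cmp_id_l C (F A) (F B);
     cmp_id_r := fun A B => cmp_id_r C (F A) (F B);
     cmp_assoc := fun A B D E => cmp_assoc C (F A) (F B) (F D) (F E) |}.

Definition induced_forget : Functor induced_cat C :=
  {| fobj := F;
     fmap := fun A B (f : Hom induced_cat A B) => f;
     fmap_id := fun A => eq_refl;
     fmap_comp := fun A B D g f => eq_refl |}.

Lemma is_iso_induced A B (f : Hom C (F A) (F B)) :
  is_iso C f -> is_iso induced_cat (f : Hom induced_cat A B).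
Proof. exact (fun iso_f => iso_f). Qed.

(** [s] and the isomorphisms [e X : F (s X) ~ X] make [F] essentially surjective. *)
Variables (s : O -> O') (e : forall X, Hom C (F (s X)) X)
  (e' : forall X, Hom C X (F (s X))).
Hypotheses (e_e' : forall X, cmp C (e X) (e' X) = idm C X)
  (e'_e : forall X, cmp C (e' X) (e X) = idm C (F (s X))).

Lemma cmp_conj X Y (f : Hom C X Y) :
  cmp C (e Y) (cmp C (cmp C (e' Y) f) (e X)) = cmp C f (e X).
Proof. now rewrite !cmp_assoc, e_e', cmp_id_l. Qed.

Definition induced_lift : Functor C induced_cat.
Proof.
  refine {| fobj := s;
            fmap := fun X Y (f : Hom C X Y) =>
                      (cmp C (cmp C (e' Y) f) (e X) : Hom induced_cat (s X) (s Y)) |}.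
  - intros X; cbn. now rewrite cmp_id_r, e'_e.
  - intros X Y Z g f; cbn.
    now rewrite <- (cmp_assoc C _ _ _ _ _ (e Y)), cmp_conj, !cmp_assoc.
Defined.

Lemma induced_cat_equiv : Equivalent C induced_cat.
Proof.
  exists induced_lift, induced_forget; split.
  - exists e; split.
    + intros X; exists (e' X); split; [apply e'_e | apply e_e'].
    + intros X Y f; cbn. now rewrite cmp_conj.
  - exists (fun A => e (F A) : Hom induced_cat (s (F A)) A); split.
    + intros A; exists (e' (F A)); split; [apply e'_e | apply e_e'].
    + intros A B f; cbn. now rewrite cmp_conj.
Qed.

End InducedCategory.

Section CCCLaws.

Variables (O : Type) (C : CatOn O) (HC : CCCOn C).

Lemma bang_one_idm : bang HC (one HC) = idm C (one HC).
Proof. symmetry; apply bang_uniq. Qed.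

Lemma pair_pi1_pi2 A B : pair HC (pi1 HC A B) (pi2 HC A B) = idm C (prod HC A B).
Proof. now rewrite (pair_uniq HC _ _ _ (idm C (prod HC A B))), !cmp_id_r. Qed.

Lemma cur_ev_idm A B : cur HC (ev HC A B) = idm C (exp HC A B).
Proof.
  rewrite (cur_uniq HC _ _ _ (idm C (exp HC A B))).
  now rewrite cmp_id_l, pair_pi1_pi2, cmp_id_r.
Qed.

End CCCLaws.

Section InterpretationCCC.

Variables (O : Type) (C : CatOn O) (HC : CCCOn C).

Fixpoint interp (A : BiMag O) : O :=
  match A with
  | bvar X => X
  | bone => one HC
  | bprod A B => prod HC (interp A) (interp B)
  | bexp A B => exp HC (interp A) (interp B)
  end.

Definition interp_cat : CatOn (BiMag O) := induced_cat C interp.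

Definition interp_ccc : CCCOn interp_cat :=
  Build_CCCOn interp_cat bone
    (fun X => bang HC (interp X))
    (fun X => bang_uniq HC (interp X))
    (@bprod O)
    (fun A B => pi1 HC (interp A) (interp B))
    (fun A B => pi2 HC (interp A) (interp B))
    (fun X A B => @pair _ _ HC (interp X) (interp A) (interp B))
    (fun X A B => pair_pi1 HC (interp X) (interp A) (interp B))
    (fun X A B => pair_pi2 HC (interp X) (interp A) (interp B))
    (fun X A B => pair_uniq HC (interp X) (interp A) (interp B))
    (@bexp O)
    (fun A B => ev HC (interp A) (interp B))
    (fun X A B => @cur _ _ HC (interp X) (interp A) (interp B))
    (fun X A B => cur_ev HC (interp X) (interp A) (interp B))
    (fun X A B => cur_uniq HC (interp X) (interp A) (interp B)).

Fixpoint interp_tm A B (t : Tm A B) : Hom C (interp A) (interp B) :=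
  match t in Tm A B return Hom C (interp A) (interp B) with
  | t_id A => idm C (interp A)
  | t_comp g f => cmp C (interp_tm g) (interp_tm f)
  | t_bang A => bang HC (interp A)
  | t_pi1 A B => pi1 HC (interp A) (interp B)
  | t_pi2 A B => pi2 HC (interp A) (interp B)
  | t_pair f g => pair HC (interp_tm f) (interp_tm g)
  | t_ev A B => ev HC (interp A) (interp B)
  | t_cur f => cur HC (interp_tm f)
  end.

Lemma interp_tm_resp A B (f g : Tm A B) : TmEq f g -> interp_tm f = interp_tm g.
Proof.
  induction 1; cbn; try congruence.
  - apply cmp_id_l.
  - apply cmp_id_r.
  - apply cmp_assoc.
  - apply bang_uniq.
  - apply pair_pi1.
  - apply pair_pi2.
  - apply pair_uniq.
  - apply cur_ev.
  - apply cur_uniq.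
Qed.

Definition interp_sorted_ccc : SSortedCCC O.
Proof.
  refine {| sc_cat := interp_cat; sc_ccc := interp_ccc; iota := interp_tm;
            iota_resp := interp_tm_resp; iota_id := fun A => eq_refl;
            iota_comp := fun A B D g f => eq_refl |}; cbn.
  all: unfold interp_cat.
  - apply is_iso_induced; rewrite bang_one_idm; apply is_iso_idm.
  - intros A B; apply is_iso_induced; rewrite pair_pi1_pi2; apply is_iso_idm.
  - intros A B psi psi_pair _; apply is_iso_induced.
    rewrite pair_pi1_pi2, cmp_id_r in psi_pair; subst psi.
    rewrite cmp_id_r, cur_ev_idm; apply is_iso_idm.
Defined.

Lemma interp_sorted_ccc_equiv : Equivalent C (sc_cat interp_sorted_ccc).
Proof.
  apply (induced_cat_equiv C interp (@bvar O) (fun X => idm C X) (fun X => idm C X));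
    intros; apply cmp_id_l.
Qed.

End InterpretationCCC.

Theorem mainTheorem8 (C : Category) (HC : CCCOn (cat C)) :
  exists (S : Type) (Ct : SSortedCCC S), Equivalent (cat C) (sc_cat Ct).
Proof.
  exists (Ob C), (interp_sorted_ccc HC).
  apply interp_sorted_ccc_equiv.
Qed.
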